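(* Let $n\geqslant 2$ and $N=\{1,\ldots,n\}$. Write $\mathscr{BG}(n)=\mathsf{Lin}(\mathscr{BG}(n))\oplus\mathscr{BG}^0(n)$, where $\mathsf{Lin}(\mathscr{BG}(n))$ is the lineality space of $\mathscr{BG}(n)$ and $\mathscr{BG}^0(n)=\{v\in\mathscr{BG}(n): v(\{i\})=0 \text{ for all } i\in N\}$. Then the extremal rays of $\mathscr{BG}(n)$ (in this decomposition) are: (i) the $2n$ rays $w_1,\ldots,w_n,-w_1,\ldots,-w_n$ spanning the lineality space, where $w_i=\sum_{S\ni i}\delta_S$; (ii) the $2^n-n-2$ rays $r_S=-\delta_S$, for $S\subsetneq N$ with $|S|>1$; (iii) the $n$ rays $r_i=\sum_{S\ni i,\,|S|>1}\delta_S$, $i\in N$; i.e., the extremal rays of the pointed cone $\mathscr{BG}^0(n)$ are exactly those spanned by the $r_S$ and $r_i$ above. This yields in total $2^n+2n-2$ extremal rays.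
   Context: A game on $N=\{1,\ldots,n\}$ is a map $v:2^N\to\mathbb{R}$ with $v(\varnothing)=0$, identified with a vector in $\mathbb{R}^{2^N\setminus\{\varnothing\}}$. For nonempty $S\subseteq N$, $\delta_S(T)=1$ if $T=S$ and $0$ otherwise. A collection $\mathscr{B}$ of nonempty subsets of $N$ is balanced if there exist positive weights $(\lambda_S)_{S\in\mathscr{B}}$ with $\sum_{S\in\mathscr{B},S\ni i}\lambda_S=1$ for all $i\in N$; it is minimal balanced if no proper subcollection is balanced, and then its weights $\lambda^{\mathscr{B}}_S$ are unique. $\mathfrak{B}^*(n)$ is the set of minimal balanced collections on $N$ other than $\{N\}$. $\mathscr{BG}(n)$ is the polyhedral cone of games $v$ with $\sum_{S\in\mathscr{B}}\lambda^{\mathscr{B}}_S v(S)\leqslant v(N)$ for all $\mathscr{B}\in\mathfrak{B}^*(n)$; its lineality space is spanned by $w_1,\ldots,w_n$. *)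

From HB Require Import structures.
From mathcomp Require Import all_boot all_order all_algebra.
Import Order.TTheory GRing.Theory Num.Theory.
Local Open Scope ring_scope.

Notation gvec R n := {ffun {set 'I_n} -> R}.

Definition gscale (R : realFieldType) (n : nat) (a : R) (x : gvec R n) : gvec R n :=
  [ffun T : {set 'I_n} => a * x T].

Definition is_game (R : realFieldType) (n : nat) (v : gvec R n) : Prop :=
  v set0 = 0.

Definition delta (R : realFieldType) (n : nat) (S : {set 'I_n}) : gvec R n :=
  [ffun T : {set 'I_n} => (T == S)%:R].

Definition wvec (R : realFieldType) (n : nat) (i : 'I_n) : gvec R n :=
  [ffun T : {set 'I_n} => (i \in T)%:R].

Definition rset (R : realFieldType) (n : nat) (S : {set 'I_n}) : gvec R n :=
  - delta R n S.

Definition rpt (R : realFieldType) (n : nat) (i : 'I_n) : gvec R n :=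
  [ffun T : {set 'I_n} => ((i \in T) && (1 < #|T|)%N)%:R].

Definition balancing_weights (R : realFieldType) (n : nat)
    (B : {set {set 'I_n}}) (lam : {set 'I_n} -> R) : Prop :=
  (forall S, S \in B -> 0 < lam S) /\
  (forall i : 'I_n, \sum_(S in B | i \in S) lam S = 1).

Definition balanced (R : realFieldType) (n : nat) (B : {set {set 'I_n}}) : Prop :=
  (forall S, S \in B -> S != set0) /\ exists lam, balancing_weights R n B lam.

Definition minimal_balanced (R : realFieldType) (n : nat) (B : {set {set 'I_n}}) : Prop :=
  balanced R n B /\ forall B' : {set {set 'I_n}}, B' \proper B -> ~ balanced R n B'.

(* BG(n): for every minimal balanced collection B other than {N}, with its
   (unique) weights lambda^B: sum_{S in B} lambda_S v(S) <= v(N). *)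
Definition BG (R : realFieldType) (n : nat) (v : gvec R n) : Prop :=
  is_game R n v /\
  forall B : {set {set 'I_n}}, minimal_balanced R n B -> B != [set setT] ->
    forall lam, balancing_weights R n B lam ->
      \sum_(S in B) lam S * v S <= v setT.

Definition BG0 (R : realFieldType) (n : nat) (v : gvec R n) : Prop :=
  BG R n v /\ forall i : 'I_n, v [set i] = 0.

Definition lineality (R : realFieldType) (n : nat) (C : gvec R n -> Prop)
    (x : gvec R n) : Prop := C x /\ C (- x).

Definition extreme_ray (R : realFieldType) (n : nat) (C : gvec R n -> Prop)
    (x : gvec R n) : Prop :=
  C x /\ x != 0 /\
  forall y z, C y -> C z -> x = y + z -> exists a : R, 0 <= a /\ y = gscale R n a x.

From HB Require Import structures.
From mathcomp Require Import all_boot all_order all_algebra.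
From mathcomp Require Import ring lra.
From Stdlib Require Import Classical.
Import Order.TTheory GRing.Theory Num.Theory.
Local Open Scope ring_scope.

(* By the Bondareva-Shapley theorem, every v in BG(n) has a core element a,
   i.e. v(S) <= a(S) for all S and a(N) <= v(N); we derive it from an
   inhomogeneous Farkas lemma, proved by Fourier-Motzkin elimination, after
   extending the defining inequalities of BG(n) from minimal balanced
   collections to all balancing weights by a simplex-like support reduction.
   If moreover v(i) = 0 for all i, then a >= 0, a(N) = v(N) and
     v = sum_i a_i r_i + sum_(S proper, |S| > 1) (a(S) - v(S)) r_S
   with nonnegative coefficients, so every extremal ray of BG^0(n) is spanned by
   some r_i or r_S.  Conversely, if y + z is a multiple of r_S or r_i with y, z
   in BG^0(n), then every balancing inequality that is tight for it is tight
   for y, and enough of them exist to force y to be proportional to it.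
   Finally, v and -v both lie in BG(n) only if all balancing inequalities are
   equalities; the collections {T} + {{j} : j not in T} then force
   v(T) = sum_(j in T) v(j). *)

Lemma exists_between (R : realDomainType) (L U : seq R) :
    (forall l u, l \in L -> u \in U -> l <= u) ->
  exists t, (forall l, l \in L -> l <= t) /\ (forall u, u \in U -> t <= u).
Proof.
elim: L => [|l L IH] LU.
  exists (foldr Num.min 0 U); split=> // u.
  elim: U {LU} => // u' U IHU; rewrite inE => /predU1P[->|uU] /=.
    by rewrite ge_min lexx.
  by rewrite ge_min IHU ?orbT.
have [|t [Lt tU]] := IH.
  by move=> l' u lL uU; apply: LU; rewrite // inE lL orbT.
exists (Num.max l t); split=> [l'|u uU].
  by rewrite inE le_max => /predU1P[->|/Lt->]; rewrite ?lexx ?orbT.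
by rewrite ge_max tU // andbT LU ?mem_head.
Qed.

Section FourierMotzkin.
Variables (R : realFieldType) (k : nat).
Local Notation row := {ffun 'I_k -> R}.
Local Notation constraint := (row * R)%type.
Implicit Types (s : seq constraint) (p q : constraint) (x : 'I_k -> R) (j : 'I_k).

(* The constraint [(c, b)] stands for the inequality [b <= dotp c x]. *)
Definition dotp (c : row) x : R := \sum_j c j * x j.

Definition cscale (t : R) p : constraint := ([ffun j => t * p.1 j], t * p.2).

Inductive conic s : constraint -> Prop :=
| conic_mem p : p \in s -> conic s p
| conicD p q : conic s p -> conic s q -> conic s (p + q)
| conicZ t p : 0 <= t -> conic s p -> conic s (cscale t p).

Lemma dotpD (c d : row) x : dotp (c + d) x = dotp c x + dotp d x.
Proof. by rewrite /dotp -big_split; apply: eq_bigr => j _; rewrite ffunE mulrDl. Qed.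

Lemma dotp_cscale t p x : dotp (cscale t p).1 x = t * dotp p.1 x.
Proof. by rewrite /dotp mulr_sumr; apply: eq_bigr => j _; rewrite ffunE mulrA. Qed.

Lemma dotp_update (c : row) x j t :
  dotp c (fun i => if i == j then t else x i) = dotp c x + c j * (t - x j).
Proof.
rewrite /dotp (bigD1 j) //= [in RHS](bigD1 j) //= eqxx.
by rewrite (eq_bigr (fun i => c i * x i)) => [|i /negbTE->]; first ring.
Qed.

Definition fm_comb j p q : constraint := cscale (- q.1 j) p + cscale (p.1 j) q.

Definition fm_elim j s : seq constraint :=
  [seq p : constraint <- s | p.1 j == 0] ++
  [seq fm_comb j p q | p <- [seq p : constraint <- s | 0 < p.1 j],
                        q <- [seq q : constraint <- s | q.1 j < 0]].

Lemma fm_elimP j s p : p \in fm_elim j s ->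
  p \in s /\ p.1 j = 0 \/
  exists2 q1, q1 \in s /\ 0 < q1.1 j &
    exists2 q2, q2 \in s /\ q2.1 j < 0 & p = fm_comb j q1 q2.
Proof.
rewrite mem_cat mem_filter => /orP[/andP[/eqP p0 ps]|]; first by left.
case/allpairsPdep => q1 [q2 []]; rewrite !mem_filter => /andP[q10 q1s] /andP[q20 q2s] ->.
by right; exists q1 => //; exists q2.
Qed.

Lemma conic_fm_elim [j s p] : conic (fm_elim j s) p -> conic s p.
Proof.
elim=> {p} [p /fm_elimP[[ps _]|[q1 [q1s q10] [q2 [q2s q20] ->]]]|p q _ ? _ ?|t p ? _ ?].
- exact: conic_mem.
- by apply: conicD; apply: conicZ; rewrite ?oppr_ge0 ?ltW //; apply: conic_mem.
- exact: conicD.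
- exact: conicZ.
Qed.

Lemma fm_elim_vanish j s p : p \in fm_elim j s ->
  p.1 j = 0 /\ forall j', (forall q, q \in s -> q.1 j' = 0) -> p.1 j' = 0.
Proof.
case/fm_elimP => [[ps ->]|[q1 [q1s _] [q2 [q2s _] ->]]]; first by split=> // j' /(_ p ps).
by split=> [|j' s0]; rewrite /= !ffunE ?s0 //; ring.
Qed.

Lemma fm_lift [j s x] : (forall p, p \in fm_elim j s -> p.2 <= dotp p.1 x) ->
  exists t, forall p, p \in s -> p.2 <= dotp p.1 (fun i => if i == j then t else x i).
Proof.
move=> sat; pose slack p := p.2 - dotp p.1 x.
pose bound p := slack p / p.1 j.
have [|d [Ld dU]] := @exists_between R [seq bound p | p <- s & 0 < p.1 j]
                                      [seq bound q | q <- s & q.1 j < 0].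
  move=> _ _ /mapP[p + ->] /mapP[q + ->]; rewrite !mem_filter => /andP[p0 ps] /andP[q0 qs].
  have pq : fm_comb j p q \in fm_elim j s.
    rewrite mem_cat; apply/orP; right; apply/allpairsP; exists (p, q).
    by rewrite !mem_filter p0 q0 ps qs.
  have := sat _ pq; rewrite /= dotpD !dotp_cscale => comb.
  have -> : bound p <= bound q = (slack q * p.1 j <= slack p * q.1 j).
    by rewrite /bound ler_pdivrMr // mulrAC ler_ndivlMr.
  rewrite -subr_ge0 (_ : _ - _ = - q.1 j * dotp p.1 x + p.1 j * dotp q.1 x
                                  - (- q.1 j * p.2 + p.1 j * q.2)) ?subr_ge0 //.
  by rewrite /slack; ring.
exists (x j + d) => p ps; rewrite dotp_update addrAC subrr add0r -lerBlDl -/(slack p).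
case: (ltgtP (p.1 j) 0) => [p0|p0|p0].
- by rewrite mulrC -ler_ndivlMr // dU //; apply: map_f; rewrite mem_filter p0.
- by rewrite mulrC -ler_pdivrMr // Ld //; apply: map_f; rewrite mem_filter p0.
- by rewrite p0 mul0r subr_le0 sat // mem_cat mem_filter ps p0 eqxx.
Qed.

Lemma farkas_vanishing m s :
    (forall p, p \in s -> forall j : 'I_k, (m <= j)%N -> p.1 j = 0) ->
    (forall p, conic s p -> p.1 = 0 -> p.2 <= 0) ->
  exists x, forall p, p \in s -> p.2 <= dotp p.1 x.
Proof.
elim: m s => [|m IH] s vanish consistent.
  exists (fun=> 0) => p ps; rewrite /dotp big1 => [|j _]; last by rewrite mulr0.
  by apply: consistent; [apply: conic_mem | apply/ffunP => j; rewrite vanish ?ffunE].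
have [km|mk] := leqP k m.
  by apply: IH => // p ps j; rewrite leqNgt (leq_trans (ltn_ord j) km).
pose j := Ordinal mk.
have vanish_elim p : p \in fm_elim j s -> forall j' : 'I_k, (m <= j')%N -> p.1 j' = 0.
  move=> /fm_elim_vanish[pj vanish'] j'; rewrite leq_eqVlt => /predU1P[mj|mj].
    by rewrite -pj; congr (p.1 _); apply: val_inj.
  by apply: vanish' => q qs; apply: vanish.
have [x sat] := IH _ vanish_elim (fun p cp => consistent p (conic_fm_elim cp)).
by have [t ?] := fm_lift sat; exists (fun i => if i == j then t else x i).
Qed.

Theorem farkas s : (forall p, conic s p -> p.1 = 0 -> p.2 <= 0) ->
  exists x, forall p, p \in s -> p.2 <= dotp p.1 x.
Proof. by apply: (farkas_vanishing k) => p _ j; rewrite leqNgt ltn_ord. Qed.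

End FourierMotzkin.

Arguments dotp {R k} c x.
Arguments conic {R k} s _.
Arguments farkas {R k} s.

Section Games.
Variables (R : realFieldType) (n : nat).
Local Notation game := (gvec R n).
Local Notation coalition := {set 'I_n}.
Local Notation gscale := (gscale R n).
Local Notation delta := (delta R n).
Local Notation wvec := (wvec R n).
Local Notation rset := (rset R n).
Local Notation rpt := (rpt R n).
Local Notation BG := (BG R n).
Local Notation BG0 := (BG0 R n).
Implicit Types (v w x y z lam e : game) (S T U : coalition) (B : {set coalition}).

Lemma set1_neq0 (i : 'I_n) : [set i] != set0.
Proof. by apply/set0Pn; exists i; apply: set11. Qed.

Lemma sum_setT (F : 'I_n -> R) : \sum_(i in setT) F i = \sum_i F i.
Proof. by apply: eq_bigl => i; rewrite in_setT. Qed.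

Lemma gscaleA a b x : gscale a (gscale b x) = gscale (a * b) x.
Proof. by apply/ffunP => T; rewrite !ffunE mulrA. Qed.

Lemma gscale0 x : gscale 0 x = 0.
Proof. by apply/ffunP => T; rewrite !ffunE mul0r. Qed.

Lemma gscale1 x : gscale 1 x = x.
Proof. by apply/ffunP => T; rewrite ffunE mul1r. Qed.

Lemma BG_add [v w] : BG v -> BG w -> BG (v + w).
Proof.
move=> [v0 BGv] [w0 BGw]; split=> [|B minB BT lam wlam].
  by rewrite /is_game ffunE v0 w0 addr0.
rewrite ffunE (eq_bigr (fun S => lam S * v S + lam S * w S)) => [|S _].
  by rewrite big_split lerD ?BGv ?BGw.
by rewrite ffunE mulrDr.
Qed.

Lemma BG_scale a [v] : 0 <= a -> BG v -> BG (gscale a v).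
Proof.
move=> a_ge0 [v0 BGv]; split=> [|B minB BT lam wlam].
  by rewrite /is_game ffunE v0 mulr0.
rewrite ffunE (eq_bigr (fun S => a * (lam S * v S))) => [|S _].
  by rewrite -mulr_sumr ler_wpM2l ?BGv.
by rewrite ffunE mulrCA.
Qed.

Lemma BG0_add [v w] : BG0 v -> BG0 w -> BG0 (v + w).
Proof.
by move=> [BGv v1] [BGw w1]; split=> [|i]; [exact: BG_add | rewrite ffunE v1 w1 addr0].
Qed.

Lemma BG0_scale a [v] : 0 <= a -> BG0 v -> BG0 (gscale a v).
Proof.
by move=> a_ge0 [BGv v1]; split=> [|i]; [exact: BG_scale | rewrite ffunE v1 mulr0].
Qed.

Lemma BG0_0 : BG0 0.
Proof.
split=> [|i]; last by rewrite ffunE.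
split=> [|B _ _ lam _]; first by rewrite /is_game ffunE.
by rewrite ffunE big1 // => S _; rewrite ffunE mulr0.
Qed.

Lemma BG0_card_le1 [v T] : BG0 v -> (#|T| <= 1)%N -> v T = 0.
Proof.
move=> [[v0 _] v1]; rewrite leq_eqVlt ltnS leqn0.
by case/orP=> [/cards1P[i ->]|/eqP/cards0_eq->].
Qed.

(* Systems of weights are represented as game vectors too, so that [gdot] is a
   bilinear pairing. *)
Definition gdot v lam : R := \sum_S lam S * v S.

Lemma gdotDl v w lam : gdot (v + w) lam = gdot v lam + gdot w lam.
Proof. by rewrite -big_split; apply: eq_bigr => S _; rewrite ffunE mulrDr. Qed.

Lemma gdotNl v lam : gdot (- v) lam = - gdot v lam.
Proof. by rewrite -sumrN; apply: eq_bigr => S _; rewrite ffunE mulrN. Qed.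

Lemma gdotZl a v lam : gdot (gscale a v) lam = a * gdot v lam.
Proof. by rewrite mulr_sumr; apply: eq_bigr => S _; rewrite ffunE mulrCA. Qed.

Lemma gdot0l lam : gdot 0 lam = 0.
Proof. by rewrite /gdot big1 // => S _; rewrite ffunE mulr0. Qed.

Lemma gdot_suml (I : Type) (r : seq I) (P : pred I) (F : I -> game) lam :
  gdot (\sum_(k <- r | P k) F k) lam = \sum_(k <- r | P k) gdot (F k) lam.
Proof. exact: (big_morph (gdot^~ lam) (fun v w => gdotDl v w lam) (gdot0l lam)). Qed.

Lemma gdot_deltal S lam : gdot (delta S) lam = lam S.
Proof.
rewrite /gdot (bigD1 S) //= ffunE eqxx mulr1 big1 ?addr0 // => T /negbTE TS.
by rewrite ffunE TS mulr0.
Qed.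

Lemma gdotDr v lam lam' : gdot v (lam + lam') = gdot v lam + gdot v lam'.
Proof. by rewrite -big_split; apply: eq_bigr => S _; rewrite ffunE mulrDl. Qed.

Lemma gdotBr v lam lam' : gdot v (lam - lam') = gdot v lam - gdot v lam'.
Proof. by rewrite -sumrB; apply: eq_bigr => S _; rewrite !ffunE mulrBl. Qed.

Lemma gdotZr a v lam : gdot v (gscale a lam) = a * gdot v lam.
Proof. by rewrite mulr_sumr; apply: eq_bigr => S _; rewrite ffunE mulrA. Qed.

Lemma gdot0r v : gdot v 0 = 0.
Proof. by rewrite /gdot big1 // => S _; rewrite ffunE mul0r. Qed.

Lemma gdot_sumr (I : Type) (r : seq I) (P : pred I) (F : I -> game) v :
  gdot v (\sum_(k <- r | P k) F k) = \sum_(k <- r | P k) gdot v (F k).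
Proof. exact: (big_morph (gdot v) (gdotDr v) (gdot0r v)). Qed.

Lemma gdot_deltar v S : gdot v (delta S) = v S.
Proof.
rewrite /gdot (bigD1 S) //= ffunE eqxx mul1r big1 ?addr0 // => T /negbTE TS.
by rewrite ffunE TS mul0r.
Qed.

Definition coverage lam (i : 'I_n) : R := gdot (wvec i) lam.

Lemma coverageE lam i : coverage lam i = \sum_(S : coalition | i \in S) lam S.
Proof.
rewrite /coverage /gdot [RHS]big_mkcond; apply: eq_bigr => S _.
by rewrite ffunE; case: (i \in S); rewrite ?mulr1 ?mulr0.
Qed.

Lemma coverage_delta S i : coverage (delta S) i = (i \in S)%:R.
Proof. by rewrite /coverage gdot_deltar ffunE. Qed.

Definition balancing (c : R) lam : Prop :=
  [/\ forall S, 0 <= lam S, lam set0 = 0 & forall i, coverage lam i = c].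

Lemma balancing0 lam : balancing 0 lam -> lam = 0.
Proof.
move=> [lam_ge0 lam0 cov]; apply/ffunP => S; rewrite ffunE.
have [->//|/set0Pn[i iS]] := eqVneq S set0.
by have := cov i; rewrite coverageE => /psumr_eq0P; apply.
Qed.

Definition singleton_completion T : game :=
  delta T + \sum_(j | j \notin T) delta [set j].

Lemma gdot_singleton_completion v T :
  gdot v (singleton_completion T) = v T + \sum_(j | j \notin T) v [set j].
Proof.
by rewrite gdotDr gdot_deltar gdot_sumr; under eq_bigr do rewrite gdot_deltar.
Qed.

Lemma balancing_singleton_completion [T] :
  T != set0 -> balancing 1 (singleton_completion T).
Proof.
move=> T0; split=> [S||i].
- by rewrite !ffunE sum_ffunE addr_ge0 ?sumr_ge0 // => j _; rewrite ffunE.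
- rewrite !ffunE sum_ffunE eq_sym (negbTE T0) add0r big1 // => j _.
  by rewrite ffunE eq_sym (negbTE (set1_neq0 j)).
rewrite /coverage gdot_singleton_completion !ffunE.
under eq_bigr do rewrite ffunE in_set1.
have [iT|iT] := boolP (i \in T).
  by rewrite big1 ?addr0 // => j jT; case: eqP => // ij; rewrite -ij iT in jT.
by rewrite add0r (bigD1 i) //= eqxx big1 ?addr0 // => j /andP[_]; rewrite eq_sym => /negbTE->.
Qed.

Definition three_cover T (j : 'I_n) : game :=
  gscale 2^-1 (delta T + delta (~: T :|: [set j]) + delta [set~ j]).

Lemma gdot_three_cover v T j :
  gdot v (three_cover T j) = (v T + v (~: T :|: [set j]) + v [set~ j]) / 2.
Proof. by rewrite gdotZr !gdotDr !gdot_deltar mulrC. Qed.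

Lemma balancing_three_cover [T j] : (1 < n)%N -> j \in T -> balancing 1 (three_cover T j).
Proof.
move=> n_gt1 jT; split=> [S||i].
- by rewrite !ffunE mulr_ge0 ?invr_ge0 ?ler0n // !addr_ge0.
- have neq0 U : U != set0 -> (set0 == U) = false by rewrite eq_sym => /negbTE.
  have C0 : [set~ j] != set0 by rewrite -card_gt0 cardsC1 card_ord -subn1 subn_gt0.
  by rewrite !ffunE !neq0 //= ?addr0 ?mulr0 //; apply/set0Pn; exists j; rewrite ?inE ?eqxx ?orbT.
rewrite /coverage gdot_three_cover !ffunE !inE.
by case: (eqVneq i j) => [->|_]; rewrite ?jT ?orbT //=; case: (i \in T); rewrite /= ?orbT; field.
Qed.

Definition supp lam : {set coalition} := [set S | lam S != 0].

Definition restrict B (lam : coalition -> R) : game :=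
  [ffun S => if S \in B then lam S else 0].

Lemma gdot_supp v lam : gdot v lam = \sum_(S in supp lam) lam S * v S.
Proof.
rewrite /gdot (bigID (mem (supp lam))) /= [X in _ + X]big1 ?addr0 // => S.
by rewrite inE negbK => /eqP->; rewrite mul0r.
Qed.

Lemma balancing_supp [lam] : balancing 1 lam ->
  (forall S, S \in supp lam -> S != set0) /\ balancing_weights R n (supp lam) lam.
Proof.
move=> [lam_ge0 lam0 cov]; split=> [S|].
  by apply: contraTneq => ->; rewrite inE lam0 eqxx.
split=> [S|i]; first by rewrite inE lt_def lam_ge0 andbT.
rewrite -(cov i) coverageE [RHS](bigID (mem (supp lam))) /= [X in _ + X]big1 ?addr0.
  by apply: eq_bigl => S; rewrite andbC.
by move=> S /andP[_]; rewrite inE negbK => /eqP.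
Qed.

Lemma gdot_restrict v B (lam : coalition -> R) :
  gdot v (restrict B lam) = \sum_(S in B) lam S * v S.
Proof.
by rewrite /gdot [RHS]big_mkcond; apply: eq_bigr => S _; rewrite ffunE; case: ifP; rewrite ?mul0r.
Qed.

Lemma balancing_restrict [B] [lam : coalition -> R] :
    (forall S, S \in B -> S != set0) -> balancing_weights R n B lam ->
  balancing 1 (restrict B lam).
Proof.
move=> B0 [lam_gt0 cov]; split=> [S||i]; rewrite ?ffunE.
- by case: ifP => // /lam_gt0/ltW.
- by case: ifP => // /B0; rewrite eqxx.
rewrite -(cov i) coverageE big_mkcondl /=; apply: eq_bigr => S _; rewrite ffunE.
by case: ifP.
Qed.

Lemma supp_restrict [B] [lam : coalition -> R] :
  (forall S, S \in B -> 0 < lam S) -> supp (restrict B lam) = B.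
Proof.
move=> lam_gt0; apply/setP => S; rewrite inE ffunE.
by case: ifP => [/lam_gt0/lt0r_neq0->|_]; rewrite ?eqxx.
Qed.

Lemma BG_of_balancing v : is_game R n v ->
  (forall lam, balancing 1 lam -> gdot v lam <= v setT) -> BG v.
Proof.
move=> v0 le_vN; split=> // B [[B0 _] _] _ lam wlam.
by rewrite -gdot_restrict; apply/le_vN/balancing_restrict.
Qed.

(* The pivoting step of the simplex method: move from [lam] along [e] until
   the first weight vanishes. *)
Lemma ratio_test [lam e S'] :
    balancing 1 lam -> (forall i, coverage e i = 0) ->
    (forall S, lam S = 0 -> e S = 0) -> e S' < 0 ->
  exists2 t, 0 <= t &
    balancing 1 (lam + gscale t e) /\ (#|supp (lam + gscale t e)%R| < #|supp lam|)%N.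
Proof.
move=> [lam_ge0 lam0 cov_lam] cov_e e0 eS'.
case: (@arg_minP _ _ _ S' (fun S => e S < 0) (fun S => lam S / - e S) eS') => S0 eS0 minS0.
set t := lam S0 / - e S0.
have t_ge0 : 0 <= t by apply: divr_ge0; rewrite // oppr_ge0 ltW.
have entry S : (lam + gscale t e) S = lam S + t * e S by rewrite !ffunE.
exists t => //; split; first split=> [S||i].
- rewrite entry; have [eS_ge0|eS_lt0] := leP 0 (e S); first by rewrite addr_ge0 // mulr_ge0.
  by have := minS0 S eS_lt0; rewrite -/t ler_pdivlMr ?oppr_gt0 // mulrN; lra.
- by rewrite entry lam0 e0 // mulr0 addr0.
- by rewrite /coverage gdotDr gdotZr -!/(coverage _ i) cov_lam cov_e mulr0 addr0.
apply: proper_card; apply/properP; split.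
  by apply/subsetP => S; rewrite !inE entry; apply: contra_neq => lS; rewrite lS e0 // mulr0 addr0.
exists S0; rewrite !inE ?entry.
  by apply: contraTneq eS0 => /e0->; rewrite ltxx.
by rewrite negbK /t; apply/eqP; field; rewrite ltr0_neq0.
Qed.

Lemma coverage0_neg [e i S] : coverage e i = 0 -> i \in S -> 0 < e S -> exists T, e T < 0.
Proof.
move=> cov iS eS.
case: (boolP [exists T, e T < 0]) => [/existsP[T ?]|/existsPn e_ge0]; first by exists T.
suff : 0 < coverage e i by rewrite cov ltxx.
rewrite coverageE (bigD1 S) //= (lt_le_trans eS) // lerDl sumr_ge0 // => T _.
by rewrite leNgt e_ge0.
Qed.

Lemma balancing_descent v [lam mu] :
    balancing 1 lam -> balancing 1 mu -> supp mu \proper supp lam ->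
  exists2 lam', balancing 1 lam' &
    gdot v lam <= gdot v lam' /\ (#|supp lam'| < #|supp lam|)%N.
Proof.
move=> bal_lam bal_mu lt_mu.
have [le_lam_mu|lt_mu_lam] := leP (gdot v lam) (gdot v mu).
  by exists mu; last split; rewrite ?proper_card.
have [sub_mu [S1 S1lam S1mu]] := properP lt_mu.
have [lam_ge0 lam0 cov_lam] := bal_lam; have [mu_ge0 mu0 cov_mu] := bal_mu.
have cov_e i : coverage (lam - mu) i = 0.
  by rewrite /coverage gdotBr -!/(coverage _ i) cov_lam cov_mu subrr.
have eS1 : 0 < (lam - mu) S1.
  move: S1lam S1mu; rewrite !inE !ffunE negbK => /eqP/eqP lS1 /eqP->.
  by rewrite subr0 lt_def lS1 lam_ge0.
have [i iS1] : exists i, i \in S1.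
  by apply/set0Pn; apply: contraTneq S1lam => ->; rewrite inE lam0 eqxx.
have [S' eS'] := coverage0_neg (cov_e i) iS1 eS1.
have [|t t_ge0 [bal' lt']] := ratio_test bal_lam cov_e _ eS'.
  move=> S lS; have : S \notin supp mu.
    by apply/negP => /(subsetP sub_mu); rewrite inE lS eqxx.
  by rewrite inE negbK !ffunE lS => /eqP->; rewrite subrr.
exists (lam + gscale t (lam - mu)) => //; split => //.
by rewrite gdotDr gdotZr gdotBr lerDl mulr_ge0 // subr_ge0 ltW.
Qed.

Definition additive_game (c : 'I_n -> R) : game := \sum_(i < n) gscale (c i) (wvec i).

Lemma additive_gameE c T : additive_game c T = \sum_(i in T) c i.
Proof.
rewrite sum_ffunE [RHS]big_mkcond; apply: eq_bigr => i _.
by rewrite !ffunE; case: (i \in T); rewrite ?mulr1 ?mulr0.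
Qed.

Lemma additive_gameN c : - additive_game c = additive_game (fun i => - c i).
Proof. by apply/ffunP => T; rewrite ffunE !additive_gameE sumrN. Qed.

Lemma BG_additive_game c : BG (additive_game c).
Proof.
apply: BG_of_balancing => [|lam [_ _ cov]].
  by rewrite /is_game additive_gameE big_set0.
rewrite gdot_suml additive_gameE sum_setT le_eqVlt; apply/orP; left; apply/eqP.
by apply: eq_bigr => i _; rewrite gdotZl -/(coverage lam i) cov mulr1.
Qed.

Lemma lineality_additive_game c : lineality R n BG (additive_game c).
Proof. by split; [|rewrite additive_gameN]; apply: BG_additive_game. Qed.

Lemma BG0_sub_additive [v] : BG v -> BG0 (v - additive_game (fun i => v [set i])).
Proof.
move=> BGv; split=> [|i]; last by rewrite !ffunE additive_gameE big_set1 subrr.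
by rewrite additive_gameN; apply: BG_add => //; apply: BG_additive_game.
Qed.

Lemma rpt_setT i : (1 < n)%N -> rpt i setT = 1.
Proof. by move=> n_gt1; rewrite ffunE in_setT cardsT card_ord n_gt1. Qed.

Lemma BG0_rset [S] : S \proper setT -> (1 < #|S|)%N -> BG0 (rset S).
Proof.
move=> ltS S_gt1; have S0 : S != set0 by rewrite -card_gt0 ltnW.
split=> [|i]; last first.
  by rewrite !ffunE; case: eqP => [e|]; rewrite ?oppr0 //; move: S_gt1; rewrite -e cards1.
apply: BG_of_balancing => [|lam [lam_ge0 _ _]].
  by rewrite /is_game !ffunE eq_sym (negbTE S0) oppr0.
by rewrite /rset gdotNl gdot_deltal !ffunE eq_sym (negbTE (proper_neq ltS)) oppr0 oppr_le0.
Qed.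

Lemma BG0_rpt i : (1 < n)%N -> BG0 (rpt i).
Proof.
move=> n_gt1; split=> [|j]; last by rewrite ffunE cards1 andbF.
apply: BG_of_balancing => [|lam [lam_ge0 _ cov]]; first by rewrite /is_game ffunE in_set0.
rewrite rpt_setT // -(cov i) coverageE /gdot (big_mkcond (fun S => i \in S)) ler_sum // => S _.
by rewrite ffunE; case: (i \in S); case: (1 < #|S|)%N; rewrite /= ?mulr1 ?mulr0.
Qed.

Lemma extreme_ray_sum [C : game -> Prop] [x ys] :
    C 0 -> (forall y z, C y -> C z -> C (y + z)) -> extreme_ray R n C x ->
    (forall y, y \in ys -> C y) -> x = \sum_(y <- ys) y ->
  exists2 y, y \in ys & exists2 c, 0 < c & x = gscale c y.
Proof.
move=> C0 CD [Cx [x_neq0 extx]]; elim: ys => [|y ys IH] Cys xE.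
  by move: x_neq0; rewrite xE big_nil eqxx.
have Cy : C y by apply: Cys; rewrite mem_head.
have Cys' y' : y' \in ys -> C y' by move=> y'ys; apply: Cys; rewrite inE y'ys orbT.
have Csum : C (\sum_(y' <- ys) y') by rewrite big_seq; apply: (big_ind C) => // y' /Cys'.
move: xE; rewrite big_cons => xE.
have [a [a_ge0 yE]] := extx _ _ Cy Csum xE.
have [a0|a_neq0] := eqVneq a 0.
  have [|y' y'ys cy'] := IH Cys'; first by rewrite xE yE a0 gscale0 add0r.
  by exists y'; rewrite ?inE ?y'ys ?orbT.
exists y; first exact: mem_head.
by exists a^-1; rewrite ?invr_gt0 ?lt_def ?a_neq0 // yE gscaleA mulVf ?gscale1.
Qed.

Definition indicator S : {ffun 'I_n -> R} := [ffun i => (i \in S)%:R].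

Lemma dotp_indicator S (a : 'I_n -> R) : dotp (indicator S) a = \sum_(i in S) a i.
Proof.
rewrite /dotp [RHS]big_mkcond; apply: eq_bigr => i _.
by rewrite ffunE; case: (i \in S); rewrite ?mul1r ?mul0r.
Qed.

(* The inequalities [v(S) <= a(S)] for [S] nonempty and [a(N) <= v(N)] defining
   the core of [v]. *)
Definition core_system v : seq ({ffun 'I_n -> R} * R) :=
  [seq (indicator U, v U) | U <- enum [set U : coalition | U != set0]] ++
  [:: ([ffun=> -1], - v setT)].

Lemma conic_core_system [v p] : conic (core_system v) p ->
  exists lam c, [/\ forall S, 0 <= lam S, lam set0 = 0, 0 <= c &
    p = ([ffun i => coverage lam i - c], gdot v lam - c * v setT)].
Proof.
elim=> {p} [p|p q _ [l1 [c1 [l1_ge0 l1_0 c1_ge0 ->]]] _ [l2 [c2 [l2_ge0 l2_0 c2_ge0 ->]]]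
          |t p t_ge0 _ [l [c [l_ge0 l0 c_ge0 ->]]]].
- rewrite mem_cat mem_seq1 => /orP[/mapP[U + ->]|/eqP->].
    rewrite mem_enum inE => U0; exists (delta U), 0; split=> [T|||] //; rewrite ?ffunE //.
      by rewrite eq_sym (negbTE U0).
    congr pair; last by rewrite gdot_deltar mul0r subr0.
    by apply/ffunP => i; rewrite !ffunE coverage_delta subr0.
  exists 0, 1; split=> [T|||] //; rewrite ?ffunE //.
  congr pair; last by rewrite gdot0r mul1r sub0r.
  by apply/ffunP => i; rewrite !ffunE /coverage gdot0r sub0r.
- exists (l1 + l2), (c1 + c2); split=> [S|||]; rewrite ?ffunE ?addr_ge0 ?l1_0 ?l2_0 ?addr0 //.
  congr pair; last by rewrite /= gdotDr; ring.
  by apply/ffunP => i; rewrite /= !ffunE /coverage gdotDr; ring.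
- exists (gscale t l), (t * c); split=> [S|||]; rewrite ?ffunE ?mulr_ge0 ?l0 ?mulr0 //.
  congr pair; last by rewrite /= gdotZr; ring.
  by apply/ffunP => i; rewrite /= !ffunE /coverage gdotZr; ring.
Qed.

Section NonemptyPlayers.
Hypothesis n_gt0 : (0 < n)%N.
Let i0 : 'I_n := Ordinal n_gt0.

(* Induction on the support: a support that is not minimal balanced contains a
   balanced proper subcollection, and [balancing_descent] shrinks the support
   without decreasing [gdot v]. *)
Lemma BG_balancing [v lam] : BG v -> balancing 1 lam -> gdot v lam <= v setT.
Proof.
move=> BGv; have [m] := ubnP #|supp lam|; elim: m lam => // m IH lam /ltnSE le_m bal.
have [[B [ltB [B0 [mu wmu]]]]|minimal] :=
  classic (exists B, B \proper supp lam /\ balanced R n B).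
  have bal_mu := balancing_restrict B0 wmu.
  have [|lam' bal' [le_lam' lt_lam']] := balancing_descent v bal bal_mu.
    by rewrite supp_restrict //; case: wmu.
  exact: le_trans le_lam' (IH _ (leq_trans lt_lam' le_m) bal').
have [supp0 wlam] := balancing_supp bal; rewrite gdot_supp.
have [suppT|suppT] := eqVneq (supp lam) [set setT].
  have := wlam.2 i0; rewrite suppT big_mkcondr big_set1 in_setT => lamT.
  by rewrite big_set1 lamT mul1r.
apply: (BGv.2 _ _ suppT _ wlam); split; first by split=> //; exists lam.
by move=> B ltB balB; apply: minimal; exists B.
Qed.

Lemma BG_balancing_scaled [v c lam] : BG v -> balancing c lam -> gdot v lam <= c * v setT.
Proof.
move=> BGv bal; have [lam_ge0 lam0 cov] := bal.
have [c0|c_neq0] := eqVneq c 0.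
  by move: bal; rewrite c0 => /balancing0->; rewrite gdot0r mul0r.
have c_gt0 : 0 < c.
  by rewrite lt_def c_neq0 -(cov i0) coverageE sumr_ge0.
have bal1 : balancing 1 (gscale c^-1 lam).
  split=> [S||i]; first by rewrite ffunE mulr_ge0 ?invr_ge0 ?lam_ge0 ?ltW.
    by rewrite ffunE lam0 mulr0.
  by rewrite /coverage gdotZr -/(coverage lam i) cov mulVf.
by have := BG_balancing BGv bal1; rewrite gdotZr mulrC ler_pdivrMr // mulrC.
Qed.

Theorem bondareva_shapley [v] : BG v ->
  exists a : 'I_n -> R, (forall S, v S <= \sum_(i in S) a i) /\ \sum_i a i <= v setT.
Proof.
move=> BGv; have [|a sat] := farkas (core_system v).
  move=> p /conic_core_system[lam [c [lam_ge0 lam0 c_ge0 ->]]] /= /ffunP cov.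
  rewrite subr_le0 BG_balancing_scaled //; split=> // i.
  by apply/eqP; rewrite -subr_eq0; have := cov i; rewrite !ffunE => ->.
exists a; split=> [S|].
  have [->|S0] := eqVneq S set0; first by rewrite big_set0 BGv.1.
  rewrite -dotp_indicator; apply: (sat (indicator S, v S)).
  by rewrite mem_cat map_f // mem_enum inE.
have := sat ([ffun=> -1], - v setT); rewrite mem_cat mem_seq1 eqxx orbT => /(_ isT).
by rewrite /dotp (eq_bigr (fun i => - a i)) => [|i _]; rewrite ?ffunE ?mulN1r // sumrN lerN2.
Qed.

Lemma BG0_le_setT [v T] : BG0 v -> T != set0 -> v T <= v setT.
Proof.
move=> [BGv v1] T0; have := BG_balancing BGv (balancing_singleton_completion T0).
by rewrite gdot_singleton_completion big1 ?addr0 // => j _; rewrite v1.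
Qed.

Lemma BG0_setT_ge0 [v] : BG0 v -> 0 <= v setT.
Proof. by move=> BG0v; rewrite -(BG0v.2 i0) BG0_le_setT ?set1_neq0. Qed.

Lemma lineality_gdot [x lam] : lineality R n BG x -> balancing 1 lam -> gdot x lam = x setT.
Proof.
move=> [BGx BGNx] bal; apply/le_anti; rewrite BG_balancing //=.
by have := BG_balancing BGNx bal; rewrite gdotNl ffunE lerN2.
Qed.

Lemma lineality_additive [x] : lineality R n BG x -> x = additive_game (fun i => x [set i]).
Proof.
move=> linx.
have complete T : T != set0 -> x T + \sum_(j | j \notin T) x [set j] = x setT.
  move=> T0; rewrite -gdot_singleton_completion.
  exact: lineality_gdot linx (balancing_singleton_completion T0).
have singletons : \sum_j x [set j] = x setT.
  rewrite -(complete _ (set1_neq0 i0)) (bigD1 i0) //=; congr (_ + _).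
  by apply: eq_bigl => j; rewrite in_set1.
apply/ffunP => T; rewrite additive_gameE.
have [->|T0] := eqVneq T set0; first by rewrite big_set0 linx.1.1.
apply: (@addIr _ (\sum_(j | j \notin T) x [set j])).
by rewrite complete // -singletons (bigID (fun j => j \in T)).
Qed.

Lemma lineality_eq [x x'] : lineality R n BG x -> lineality R n BG x' ->
  (forall i, x [set i] = x' [set i]) -> x = x'.
Proof.
move=> linx linx' eq1; rewrite (lineality_additive linx) (lineality_additive linx').
by apply/ffunP => T; rewrite !additive_gameE; apply: eq_bigr => i _; rewrite eq1.
Qed.

Lemma extreme_rset [S a] : S \proper setT -> (1 < #|S|)%N -> 0 < a ->
  extreme_ray R n BG0 (gscale a (rset S)).
Proof.
move=> ltS S_gt1 a_gt0; have NS : setT != S by rewrite eq_sym proper_neq.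
have xE T : gscale a (rset S) T = - a * (T == S)%:R by rewrite !ffunE mulrN mulNr.
split; first exact: BG0_scale (ltW a_gt0) (BG0_rset ltS S_gt1).
split.
  by apply/eqP => /ffunP/(_ S); rewrite xE eqxx ffunE /= mulr1 => /eqP; rewrite oppr_eq0 gt_eqF.
move=> y z BG0y BG0z /ffunP xyz.
have sumE T : y T + z T = - a * (T == S)%:R by rewrite -xE xyz ffunE.
have yN : y setT = 0.
  have := sumE setT; rewrite (negbTE NS) /= mulr0.
  by have := BG0_setT_ge0 BG0y; have := BG0_setT_ge0 BG0z; lra.
have zN : z setT = 0 by have := sumE setT; rewrite (negbTE NS) /= mulr0 yN add0r.
exists (- y S / a); split.
  by rewrite divr_ge0 ?(ltW a_gt0) // oppr_ge0 -yN BG0_le_setT // -card_gt0 ltnW.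
apply/ffunP => T; rewrite ffunE xE.
have [->|TS] := eqVneq T S; first by rewrite /=; field; rewrite gt_eqF.
rewrite /= !mulr0.
have [->|T0] := eqVneq T set0; first by case: BG0y => [[]].
have := sumE T; rewrite (negbTE TS) /= mulr0.
by have := BG0_le_setT BG0y T0; have := BG0_le_setT BG0z T0; rewrite yN zN; lra.
Qed.

Section RptSummand.
Variables (i : 'I_n) (a : R) (y z : game).
Hypotheses (n_gt1 : (1 < n)%N) (BG0y : BG0 y) (BG0z : BG0 z).
Hypothesis yz : gscale a (rpt i) = y + z.

Lemma rpt_summand_tight [lam] : balancing 1 lam -> gdot (rpt i) lam = 1 -> gdot y lam = y setT.
Proof.
move=> bal rpt1.
have : gdot (y + z) lam = (y + z) setT by rewrite -yz gdotZl rpt1 ffunE rpt_setT.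
rewrite gdotDl ffunE.
by have := BG_balancing BG0y.1 bal; have := BG_balancing BG0z.1 bal; lra.
Qed.

Lemma rpt_summand_in [U] : i \in U -> (1 < #|U|)%N -> y U = y setT.
Proof.
move=> iU U_gt1; have U0 : U != set0 by apply/set0Pn; exists i.
have y1 : \sum_(j | j \notin U) y [set j] = 0 by rewrite big1 // => j _; apply: BG0y.2.
have r1 : \sum_(j | j \notin U) rpt i [set j] = 0.
  by rewrite big1 // => j _; rewrite ffunE cards1 andbF.
have := rpt_summand_tight (balancing_singleton_completion U0).
by rewrite !gdot_singleton_completion y1 r1 !addr0; apply; rewrite ffunE iU U_gt1.
Qed.

(* The weights [three_cover T j] are tight for [r_i] and [y] is already maximal
   on the two coalitions containing [i], so no room is left for [y T]. *)
Lemma rpt_summand_out [T] : i \notin T -> (1 < #|T|)%N -> y T = 0.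
Proof.
move=> iT /card_gt1P[j [k [jT kT jk]]].
have ij : i != j by apply: contraNneq iT => ->.
have ik : i != k by apply: contraNneq iT => ->.
have iU : i \in ~: T :|: [set j] by rewrite !inE iT.
have iC : i \in [set~ j] by rewrite !inE.
have U_gt1 : (1 < #|~: T :|: [set j]|)%N.
  by apply/card_gt1P; exists i, j; rewrite !inE eqxx orbT iT.
have C_gt1 : (1 < #|[set~ j]|)%N.
  by apply/card_gt1P; exists i, k; rewrite !inE ij ik eq_sym jk.
have tight : gdot (rpt i) (three_cover T j) = 1.
  by rewrite gdot_three_cover !ffunE (negbTE iT) iU iC U_gt1 C_gt1 /=; field.
have := rpt_summand_tight (balancing_three_cover n_gt1 jT) tight.
by rewrite gdot_three_cover (rpt_summand_in iU U_gt1) (rpt_summand_in iC C_gt1); lra.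
Qed.

End RptSummand.

Lemma extreme_rpt i [a] : (1 < n)%N -> 0 < a -> extreme_ray R n BG0 (gscale a (rpt i)).
Proof.
move=> n_gt1 a_gt0; split; first exact: BG0_scale (ltW a_gt0) (BG0_rpt i n_gt1).
split.
  apply/eqP => /ffunP/(_ setT); rewrite ffunE rpt_setT // mulr1 ffunE => a0.
  by move: a_gt0; rewrite a0 ltxx.
move=> y z BG0y BG0z yz.
exists (y setT / a); split; first by rewrite divr_ge0 ?BG0_setT_ge0 ?ltW.
apply/ffunP => T; rewrite !ffunE mulrA divfK ?gt_eqF //.
have [T_le1|T_gt1] := leqP #|T| 1; first by rewrite andbF mulr0 (BG0_card_le1 BG0y).
have [iT|iT] := boolP (i \in T); rewrite /= ?mulr1 ?mulr0.
  exact: (rpt_summand_in _ _ _ _ n_gt1 BG0y BG0z yz).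
exact: (rpt_summand_out _ _ _ _ n_gt1 BG0y BG0z yz).
Qed.

Definition ray_coalitions : {set coalition} :=
  [set S : coalition | (S \proper setT) && (1 < #|S|)%N].

Lemma BG0_ray_decomposition [x a] : BG0 x -> \sum_i a i = x setT ->
  x = \sum_i gscale (a i) (rpt i) +
      \sum_(S in ray_coalitions) gscale (\sum_(j in S) a j - x S) (rset S).
Proof.
move=> BG0x sum_a; apply/ffunP => T; rewrite ffunE !sum_ffunE.
have -> : \sum_i gscale (a i) (rpt i) T = if (1 < #|T|)%N then \sum_(i in T) a i else 0.
  case: ifP => T_gt1; last by rewrite big1 // => i _; rewrite !ffunE T_gt1 andbF mulr0.
  by rewrite -additive_gameE sum_ffunE; apply: eq_bigr => i _; rewrite !ffunE T_gt1 andbT.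
have -> : \sum_(S in ray_coalitions) gscale (\sum_(j in S) a j - x S) (rset S) T =
          if T \in ray_coalitions then x T - \sum_(j in T) a j else 0.
  case: ifP => TP.
    rewrite (bigD1 T) //= [X in _ + X]big1 => [|U /andP[_ UT]]; last first.
      by rewrite !ffunE eq_sym (negbTE UT) /= oppr0 mulr0.
    by rewrite !ffunE eqxx /= addr0 mulrN1 opprB.
  rewrite big1 // => U UP; rewrite !ffunE (_ : T == U = false) /= ?oppr0 ?mulr0 //.
  by apply: contraFF TP => /eqP->.
rewrite inE properT; have [T_gt1|T_le1] := ltnP 1 #|T|; last first.
  by rewrite andbF addr0 (BG0_card_le1 BG0x T_le1).
rewrite andbT; have [->|TN] := eqVneq T setT.
  by rewrite addr0 sum_setT.
by rewrite addrC subrK.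
Qed.

Lemma extreme_BG0_ray [x] : (1 < n)%N -> extreme_ray R n BG0 x ->
  (exists S a, S \proper setT /\ (1 < #|S|)%N /\ 0 < a /\ x = gscale a (rset S)) \/
  (exists i a, 0 < a /\ x = gscale a (rpt i)).
Proof.
move=> n_gt1 extx; have [[BGx x1] [x_neq0 _]] := extx.
have [a [core_a sum_a]] := bondareva_shapley BGx.
have a_ge0 i : 0 <= a i by rewrite -(x1 i) (le_trans (core_a [set i])) ?big_set1.
have sum_aE : \sum_i a i = x setT.
  by apply/le_anti; rewrite sum_a -sum_setT core_a.
pose b S := \sum_(j in S) a j - x S.
have b_ge0 S : 0 <= b S by rewrite subr_ge0 core_a.
pose ys := [seq gscale (a i) (rpt i) | i <- enum 'I_n] ++
           [seq gscale (b U) (rset U) | U <- enum ray_coalitions].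
have [||y + [c c_gt0 xc]] := extreme_ray_sum (ys := ys) BG0_0 BG0_add extx.
- move=> y; rewrite mem_cat => /orP[]/mapP[k + ->].
    by move=> _; apply: BG0_scale (a_ge0 k) (BG0_rpt k n_gt1).
  rewrite mem_enum inE => /andP[ltk k_gt1].
  exact: BG0_scale (b_ge0 k) (BG0_rset ltk k_gt1).
- by rewrite big_cat !big_map !big_enum /=; apply: BG0_ray_decomposition.
rewrite mem_cat => /orP[]/mapP[k kin yk]; rewrite {}yk gscaleA in xc.
- right; exists k, (c * a k); split=> //; rewrite mulr_gt0 // lt_def a_ge0 andbT.
  by apply: contra_neq x_neq0 => ak0; rewrite xc ak0 mulr0 gscale0.
left; move: kin; rewrite mem_enum inE => /andP[ltk k_gt1].
exists k, (c * b k); do 3!split=> //; rewrite mulr_gt0 // lt_def b_ge0 andbT.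
by apply: contra_neq x_neq0 => bk0; rewrite xc bk0 mulr0 gscale0.
Qed.

End NonemptyPlayers.
End Games.

Theorem theorem3 (R : realFieldType) (n : nat) (hn : (2 <= n)%N) :
  (* the lineality space of BG(n) is spanned by w_1, ..., w_n *)
  (forall x : gvec R n, lineality R n (BG R n) x <->
     exists c : 'I_n -> R, x = \sum_(i < n) gscale R n (c i) (wvec R n i)) /\
  (* BG(n) = Lin(BG(n)) (+) BG^0(n) *)
  (forall l v0 : gvec R n, lineality R n (BG R n) l -> BG0 R n v0 -> BG R n (l + v0)) /\
  (forall v : gvec R n, BG R n v ->
     exists l v0, lineality R n (BG R n) l /\ BG0 R n v0 /\ v = l + v0) /\
  (forall l v0 l' v0' : gvec R n,
     lineality R n (BG R n) l -> BG0 R n v0 -> lineality R n (BG R n) l' -> BG0 R n v0' ->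
     l + v0 = l' + v0' -> l = l' /\ v0 = v0') /\
  (* the extremal rays of the pointed cone BG^0(n) are exactly those spanned
     by r_S (S proper, |S| > 1) and r_i (i in N) *)
  (forall x : gvec R n, extreme_ray R n (BG0 R n) x <->
     (exists (S : {set 'I_n}) (a : R),
         S \proper setT /\ (1 < #|S|)%N /\ 0 < a /\ x = gscale R n a (rset R n S)) \/
     (exists (i : 'I_n) (a : R), 0 < a /\ x = gscale R n a (rpt R n i))).
Proof.
have n_gt0 : (0 < n)%N := ltnW hn.
split.
  move=> x; split=> [/(lineality_additive _ _ n_gt0) xE|[c ->]].
    by exists (fun i => x [set i]).
  exact: lineality_additive_game.
split; first by move=> l v0 [BGl _] [BGv0 _]; apply: BG_add.
split.
  move=> v BGv; set l := additive_game R n (fun i => v [set i]).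
  exists l, (v - l); split; first exact: lineality_additive_game.
  by split; [exact: BG0_sub_additive | rewrite addrC subrK].
split.
  move=> l v0 l' v0' linl [_ v01] linl' [_ v0'1] e.
  suff ll' : l = l' by split=> //; apply: (addrI l); rewrite {2}ll'.
  apply: (lineality_eq _ _ n_gt0 linl linl') => i.
  by have /ffunP/(_ [set i]) := e; rewrite !ffunE v01 v0'1 !addr0.
move=> x; split; first exact: extreme_BG0_ray.
by case=> [[S [a [ltS [S_gt1 [a_gt0 ->]]]]]|[i [a [a_gt0 ->]]]];
  [apply: extreme_rset | apply: extreme_rpt].
Qed.
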